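(* Let $l>0$ and $(a,M)\in\mathcal B_l$. Let $(\omega,m)\in\mathcal{SF}$. Then $\mathcal T(\omega,m,\cdot)\in C^\infty(r_+,\bar r_+)$, and $\mathcal T(\omega,m,\cdot)$ has a unique critical point $r_{crit}(\omega,m)\in(r_+,\bar r_+)$ (i.e. a unique point where $\frac{d\mathcal T}{dr}=0$), which is a minimum. Moreover $r_{crit}(\omega,m)=r_s(\omega,m)$, where $r_s\in(r_+,\bar r_+)$ is the (unique) value with $\omega=\frac{am\Xi}{r_s^2+a^2}$, and $$\Big|\frac{d^2\mathcal T}{dr^2}(\omega,m,r_{crit})\Big|>0 .$$
   Context: Fix $l>0$. For $a\in\mathbb R$, $M>0$ set $\Delta(r)=(r^2+a^2)\big(1-\frac{r^2}{l^2}\big)-2Mr$. We write $(a,M)\in\mathcal B_l$ (subextremal) if $\Delta$ has four distinct real roots $\bar r_-<0\le r_-<r_+<\bar r_+$. Set $\Xi=1+\frac{a^2}{l^2}$, $\omega_+=\frac{a\Xi}{r_+^2+a^2}$, $\bar\omega_+=\frac{a\Xi}{\bar r_+^2+a^2}$. The superradiant set is $\mathcal{SF}=\{(\omega,m)\in\mathbb R\times\mathbb Z:\ (\omega-m\omega_+)(\omega-m\bar\omega_+)<0\}$ (equivalently $am\omega\in(\frac{a^2m^2\Xi}{\bar r_+^2+a^2},\frac{a^2m^2\Xi}{r_+^2+a^2})$). For $(\omega,m)\in\mathbb R\times\mathbb Z$ and $r\in(r_+,\bar r_+)$ define $$\mathcal T(\omega,m,r)=\frac{(r^2+a^2)^2}{\Delta(r)}\Big(\omega-\frac{am\Xi}{r^2+a^2}\Big)^2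 .$$ *)

From Stdlib Require Import Reals ZArith.
From Coquelicot Require Import Coquelicot.
Open Scope R_scope.

Definition Delta (l a M r : R) : R :=
  (r ^ 2 + a ^ 2) * (1 - r ^ 2 / l ^ 2) - 2 * M * r.

(* (a,M) in B_l, with the four distinct real roots of Delta named
   rbm < 0 <= rm < rp < rbp  (bar r_-, r_-, r_+, bar r_+).
   Delta is a quartic with leading coefficient -1/l^2, so these four
   distinct roots are all its roots, hence they are determined by (a,M). *)
Definition subextremal (l a M rbm rm rp rbp : R) : Prop :=
  0 < M /\
  rbm < 0 /\ 0 <= rm /\ rm < rp /\ rp < rbp /\
  Delta l a M rbm = 0 /\ Delta l a M rm = 0 /\
  Delta l a M rp = 0 /\ Delta l a M rbp = 0.

Definition Xi (l a : R) : R := 1 + a ^ 2 / l ^ 2.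

Definition omega_plus (l a rp : R) : R := a * Xi l a / (rp ^ 2 + a ^ 2).
Definition omegabar_plus (l a rbp : R) : R := a * Xi l a / (rbp ^ 2 + a ^ 2).

Definition superradiant (l a rp rbp omega : R) (m : Z) : Prop :=
  (omega - IZR m * omega_plus l a rp) * (omega - IZR m * omegabar_plus l a rbp) < 0.

Definition TT (l a M omega : R) (m : Z) (r : R) : R :=
  (r ^ 2 + a ^ 2) ^ 2 / Delta l a M r
  * (omega - a * IZR m * Xi l a / (r ^ 2 + a ^ 2)) ^ 2.

From Stdlib Require Import Reals Lra FunctionalExtensionality.
From Coquelicot Require Import Coquelicot.
Open Scope R_scope.

(* Writing omega = a m Xi / (r_s^2 + a^2), one gets T = omega^2 (r^2 - r_s^2)^2 / Delta,
   a nonnegative "well" vanishing exactly at r_s; the superradiance condition is what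
   places r_s in (r_+, bar r_+).  Its derivative is
   omega^2 (r^2 - r_s^2) (4 r Delta - (r^2 - r_s^2) Delta') / Delta^2, so the whole claim
   reduces to the positivity of 4 r Delta - (r^2 - s) Delta' on (r_+, bar r_+) for every
   s in [r_+^2, bar r_+^2].  Since Delta = -(r - bar r_-)(r - r_-)(r - r_+)(r - bar r_+)/l^2
   with bar r_- = -(r_- + r_+ + bar r_+), that expression is affine in s, and its
   positivity at s = r_+^2 and s = bar r_+^2 is an elementary estimate. *)

Lemma locally_interval (lo hi x : R) (P : R -> Prop) :
  lo < x < hi -> (forall y, lo < y < hi -> P y) -> locally x P.
Proof.
  intros Hx HP. apply (filter_imp (fun y => lo < y < hi)); [exact HP|].
  exact (open_and _ _ (open_gt lo) (open_lt hi) x Hx).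
Qed.

Section DerivableOn.

Variables lo hi : R.

Fixpoint ex_derive_n_on (n : nat) (f : R -> R) : Prop :=
  match n with
  | O => True
  | S n => (forall x, lo < x < hi -> ex_derive f x) /\ ex_derive_n_on n (Derive f)
  end.

Lemma ex_derive_n_on_ext n : forall f g, (forall x, lo < x < hi -> f x = g x) ->
  ex_derive_n_on n f -> ex_derive_n_on n g.
Proof.
  induction n as [|n IH]; simpl; auto.
  intros f g Hfg [Hd Hs]. split.
  - intros x Hx. apply ex_derive_ext_loc with f; auto.
    apply (locally_interval lo hi); auto.
  - apply IH with (Derive f); auto.
    intros x Hx. apply Derive_ext_loc. apply (locally_interval lo hi); auto.
Qed.

Lemma ex_derive_n_on_pred n f : ex_derive_n_on (S n) f -> ex_derive_n_on n f.
Proof.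
  revert f; induction n as [|n IH]; simpl; auto.
  intros f [Hd Hs]. split; auto.
Qed.

Lemma ex_derive_n_on_const n c : ex_derive_n_on n (fun _ => c).
Proof.
  revert c; induction n as [|n IH]; simpl; auto. intros c. split.
  - intros; apply ex_derive_const.
  - apply ex_derive_n_on_ext with (fun _ => 0); auto.
    intros; rewrite Derive_const; auto.
Qed.

Lemma ex_derive_n_on_id n : ex_derive_n_on n (fun x => x).
Proof.
  destruct n; simpl; auto. split.
  - intros; apply ex_derive_id.
  - apply ex_derive_n_on_ext with (fun _ => 1); [|apply ex_derive_n_on_const].
    intros; rewrite Derive_id; auto.
Qed.

Lemma ex_derive_n_on_plus n : forall f g, ex_derive_n_on n f -> ex_derive_n_on n g ->
  ex_derive_n_on n (fun x => f x + g x).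
Proof.
  induction n as [|n IH]; simpl; auto.
  intros f g [Hf Sf] [Hg Sg]. split.
  - intros x Hx. apply (ex_derive_plus f g); auto.
  - apply ex_derive_n_on_ext with (fun x => Derive f x + Derive g x); auto.
    intros x Hx. rewrite Derive_plus; auto.
Qed.

Lemma ex_derive_n_on_mult n : forall f g, ex_derive_n_on n f -> ex_derive_n_on n g ->
  ex_derive_n_on n (fun x => f x * g x).
Proof.
  induction n as [|n IH]; auto.
  intros f g Sf Sg.
  pose proof (ex_derive_n_on_pred _ _ Sf) as Sf'. pose proof (ex_derive_n_on_pred _ _ Sg) as Sg'.
  destruct Sf as [Hf Sf]; destruct Sg as [Hg Sg]. split.
  - intros x Hx. apply (ex_derive_mult f g); auto.
  - apply ex_derive_n_on_ext with (fun x => Derive f x * g x + f x * Derive g x).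
    + intros x Hx. rewrite Derive_mult; auto.
    + apply ex_derive_n_on_plus; apply IH; auto.
Qed.

Lemma ex_derive_n_on_minus n f g : ex_derive_n_on n f -> ex_derive_n_on n g ->
  ex_derive_n_on n (fun x => f x - g x).
Proof.
  intros Sf Sg. apply ex_derive_n_on_ext with (fun x => f x + (-1) * g x).
  - intros; ring.
  - apply ex_derive_n_on_plus; auto. apply ex_derive_n_on_mult; auto.
    apply ex_derive_n_on_const.
Qed.

Lemma ex_derive_n_on_pow n f k : ex_derive_n_on n f -> ex_derive_n_on n (fun x => f x ^ k).
Proof.
  intros Sf. induction k as [|k IH]; simpl.
  - apply ex_derive_n_on_const.
  - apply ex_derive_n_on_mult; auto.
Qed.

Lemma ex_derive_n_on_inv n : forall f, ex_derive_n_on n f ->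
  (forall x, lo < x < hi -> f x <> 0) -> ex_derive_n_on n (fun x => / f x).
Proof.
  induction n as [|n IH]; auto.
  intros f Sf Hnz. pose proof (ex_derive_n_on_pred _ _ Sf) as Sf'.
  destruct Sf as [Hf Sf]. split.
  - intros x Hx. apply ex_derive_inv; auto.
  - apply ex_derive_n_on_ext with (fun x => (-1) * Derive f x * (/ f x * / f x)).
    + intros x Hx. rewrite Derive_inv; auto. field. auto.
    + apply ex_derive_n_on_mult; [apply ex_derive_n_on_mult|apply ex_derive_n_on_mult];
        auto using ex_derive_n_on_const.
Qed.

Lemma ex_derive_n_on_ex_derive_n n f x :
  ex_derive_n_on n f -> lo < x < hi -> ex_derive_n f n x.
Proof.
  revert f; destruct n as [|n]; [simpl; auto|].
  induction n as [|n IH]; intros f Sf Hx; simpl.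
  - apply Sf; auto.
  - destruct Sf as [_ Sf]. specialize (IH (Derive f) Sf Hx). simpl in IH.
    apply ex_derive_ext with (Derive_n (Derive f) n); auto.
    intros t. change (Derive_n (Derive_n f 1) n t = Derive (Derive_n f n) t).
    rewrite Derive_n_comp, Nat.add_1_r. reflexivity.
Qed.

End DerivableOn.

Lemma cubic_coefs_eq0 (x1 x2 x3 x4 b3 b2 b1 b0 : R) :
  x1 <> x2 -> x1 <> x3 -> x1 <> x4 -> x2 <> x3 -> x2 <> x4 -> x3 <> x4 ->
  b3*x1^3 + b2*x1^2 + b1*x1 + b0 = 0 ->
  b3*x2^3 + b2*x2^2 + b1*x2 + b0 = 0 ->
  b3*x3^3 + b2*x3^2 + b1*x3 + b0 = 0 ->
  b3*x4^3 + b2*x4^2 + b1*x4 + b0 = 0 ->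
  b3 = 0 /\ b2 = 0 /\ b1 = 0 /\ b0 = 0.
Proof.
  intros H12 H13 H14 H23 H24 H34 P1 P2 P3 P4.
  assert (Hcancel : forall x y z, x <> y -> (x - y) * z = 0 -> z = 0).
  { intros x y z Hxy E. destruct (Rmult_integral _ _ E); lra. }
  assert (E12 : b3*(x1^2+x1*x2+x2^2) + b2*(x1+x2) + b1 = 0).
  { apply (Hcancel x1 x2); auto. rewrite <- (Rminus_diag_eq _ _ (eq_trans P1 (eq_sym P2))). ring. }
  assert (E13 : b3*(x1^2+x1*x3+x3^2) + b2*(x1+x3) + b1 = 0).
  { apply (Hcancel x1 x3); auto. rewrite <- (Rminus_diag_eq _ _ (eq_trans P1 (eq_sym P3))). ring. }
  assert (E14 : b3*(x1^2+x1*x4+x4^2) + b2*(x1+x4) + b1 = 0).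
  { apply (Hcancel x1 x4); auto. rewrite <- (Rminus_diag_eq _ _ (eq_trans P1 (eq_sym P4))). ring. }
  assert (F3 : b3*(x1+x2+x3) + b2 = 0).
  { apply (Hcancel x2 x3); auto. rewrite <- (Rminus_diag_eq _ _ (eq_trans E12 (eq_sym E13))). ring. }
  assert (F4 : b3*(x1+x2+x4) + b2 = 0).
  { apply (Hcancel x2 x4); auto. rewrite <- (Rminus_diag_eq _ _ (eq_trans E12 (eq_sym E14))). ring. }
  assert (B3 : b3 = 0).
  { apply (Hcancel x3 x4); auto. rewrite <- (Rminus_diag_eq _ _ (eq_trans F3 (eq_sym F4))). ring. }
  subst b3. assert (b2 = 0) by lra. subst b2. assert (b1 = 0) by lra. subst b1. lra.
Qed.

Definition quartic (x1 x2 x3 x4 r : R) : R := (r - x1) * (r - x2) * (r - x3) * (r - x4).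

Definition quartic' (x1 x2 x3 x4 r : R) : R :=
  (r - x2) * (r - x3) * (r - x4) + (r - x1) * (r - x3) * (r - x4)
  + (r - x1) * (r - x2) * (r - x4) + (r - x1) * (r - x2) * (r - x3).

Lemma affine_pos_between p q s A B C : p <= s <= q ->
  (A - p) * B + C > 0 -> (A - q) * B + C > 0 -> (A - s) * B + C > 0.
Proof. intros. destruct (Rle_or_lt 0 B); nra. Qed.

(* With d1..d4 the (positive) distances from r to the four roots, the claim at s = x3^2
   reduces to (r+x3)(d2d3d4 + d1d3d4 + d1d2d4 - d1d2d3) < 4 r d1d2d4, which follows
   termwise from d3 <= d2, r + x3 < d1 and x3 < r. *)
Lemma quartic_radial_pos_low x2 x3 x4 r : 0 <= x2 -> x2 < x3 -> x3 < r < x4 ->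
  (r^2 - x3^2) * quartic' (-(x2+x3+x4)) x2 x3 x4 r - 4*r*quartic (-(x2+x3+x4)) x2 x3 x4 r > 0.
Proof.
  intros H2 H23 H34.
  set (d1 := r + x2 + x3 + x4); set (d2 := r - x2); set (d3 := r - x3); set (d4 := x4 - r).
  assert (E : (r^2 - x3^2) * quartic' (-(x2+x3+x4)) x2 x3 x4 r
              - 4*r*quartic (-(x2+x3+x4)) x2 x3 x4 r
    = d3 * (4*r*(d1*d2*d4) - (r+x3)*(d2*d3*d4 + d1*d3*d4 + d1*d2*d4 - d1*d2*d3))).
  { unfold quartic, quartic', d1, d2, d3, d4; ring. }
  rewrite E; clear E.
  assert (0 < d1) by (unfold d1; lra). assert (0 < d2) by (unfold d2; lra).
  assert (0 < d3) by (unfold d3; lra). assert (0 < d4) by (unfold d4; lra).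
  assert (0 < d1*d2*d4) by (repeat apply Rmult_lt_0_compat; lra).
  assert ((r+x3)*(d1*d3*d4) <= (r+x3)*(d1*d2*d4))
    by (apply Rmult_le_compat_l; [lra|]; unfold d2, d3 in *; nra).
  assert ((r+x3)*(d2*d3*d4) < d1*(d2*d3*d4)) by (apply Rmult_lt_compat_r; [nra|unfold d1; lra]).
  assert (0 < (r+x3)*(d1*d2*d3)) by (repeat apply Rmult_lt_0_compat; lra).
  assert ((3*r + x3)*(d1*d2*d4) < 4*r*(d1*d2*d4)) by (apply Rmult_lt_compat_r; lra).
  assert (d1*(d2*d3*d4) = d3*(d1*d2*d4)) by ring.
  assert (d3 = r - x3) by reflexivity.
  apply Rmult_lt_0_compat; [lra|]. nra.
Qed.

Lemma quartic_radial_pos_high x2 x3 x4 r : 0 <= x2 -> x2 < x3 -> x3 < r < x4 ->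
  (r^2 - x4^2) * quartic' (-(x2+x3+x4)) x2 x3 x4 r - 4*r*quartic (-(x2+x3+x4)) x2 x3 x4 r > 0.
Proof.
  intros H2 H23 H34.
  set (d1 := r + x2 + x3 + x4); set (d2 := r - x2); set (d3 := r - x3); set (d4 := x4 - r).
  assert (E : (r^2 - x4^2) * quartic' (-(x2+x3+x4)) x2 x3 x4 r
              - 4*r*quartic (-(x2+x3+x4)) x2 x3 x4 r
    = d4 * ((r+x4)*(d2*d3*d4 + d1*d3*d4 + d1*d2*d4 - d1*d2*d3) + 4*r*(d1*d2*d3))).
  { unfold quartic, quartic', d1, d2, d3, d4; ring. }
  rewrite E; clear E.
  assert (0 < d1) by (unfold d1; lra). assert (0 < d2) by (unfold d2; lra).
  assert (0 < d3) by (unfold d3; lra). assert (0 < d4) by (unfold d4; lra).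
  assert (0 < (r+x4)*(d2*d3*d4 + d1*d3*d4)) by
    (apply Rmult_lt_0_compat; [lra|]; apply Rplus_lt_0_compat; repeat apply Rmult_lt_0_compat; lra).
  assert (d3*(d1*d2*d4) <= (r+x4)*(d1*d2*d4)) by
    (apply Rmult_le_compat_r; [left; repeat apply Rmult_lt_0_compat; lra|unfold d3; lra]).
  assert (0 < d1*d2*d3) by (repeat apply Rmult_lt_0_compat; lra).
  assert (d4 = x4 - r) by reflexivity.
  apply Rmult_lt_0_compat; [lra|]. nra.
Qed.

Lemma quartic_radial_pos x2 x3 x4 r s : 0 <= x2 -> x2 < x3 -> x3 < r < x4 -> x3^2 <= s <= x4^2 ->
  (r^2 - s) * quartic' (-(x2+x3+x4)) x2 x3 x4 r - 4*r*quartic (-(x2+x3+x4)) x2 x3 x4 r > 0.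
Proof.
  intros H2 H23 H34 Hs.
  apply (affine_pos_between (x3^2) (x4^2)); auto.
  - apply quartic_radial_pos_low; auto.
  - apply quartic_radial_pos_high; auto.
Qed.

Definition Delta' (l a M r : R) : R :=
  2 * r * (1 - r ^ 2 / l ^ 2) - 2 * r * (r ^ 2 + a ^ 2) / l ^ 2 - 2 * M.

Lemma is_derive_Delta l a M r : l <> 0 -> is_derive (Delta l a M) r (Delta' l a M r).
Proof. intros Hl. unfold Delta, Delta'. auto_derive; [exact I | field; exact Hl]. Qed.

Lemma ex_derive_n_on_Delta lo hi n l a M : ex_derive_n_on lo hi n (Delta l a M).
Proof.
  unfold Delta, Rdiv.
  repeat first [ apply ex_derive_n_on_const | apply ex_derive_n_on_id
               | apply ex_derive_n_on_minus | apply ex_derive_n_on_plus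
               | apply ex_derive_n_on_mult | apply ex_derive_n_on_pow ].
Qed.

Lemma Delta_quartic l a M x1 x2 x3 x4 : l <> 0 -> x1 < x2 -> x2 < x3 -> x3 < x4 ->
  Delta l a M x1 = 0 -> Delta l a M x2 = 0 -> Delta l a M x3 = 0 -> Delta l a M x4 = 0 ->
  x1 + x2 + x3 + x4 = 0 /\ Delta l a M = fun r => - quartic x1 x2 x3 x4 r / l ^ 2.
Proof.
  intros Hl H12 H23 H34 R1 R2 R3 R4.
  set (e2 := x1*x2 + x1*x3 + x1*x4 + x2*x3 + x2*x4 + x3*x4).
  set (e3 := x1*x2*x3 + x1*x2*x4 + x1*x3*x4 + x2*x3*x4).
  set (e4 := x1*x2*x3*x4).
  assert (Hcubic : forall x, Delta l a M x + quartic x1 x2 x3 x4 x / l^2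
    = (-(x1+x2+x3+x4)/l^2)*x^3 + (1 - a^2/l^2 + e2/l^2)*x^2
      + (-2*M - e3/l^2)*x + (a^2 + e4/l^2)).
  { intros x. unfold Delta, quartic, e2, e3, e4. field. exact Hl. }
  assert (Hroot : forall x, Delta l a M x = 0 -> quartic x1 x2 x3 x4 x = 0 ->
    (-(x1+x2+x3+x4)/l^2)*x^3 + (1 - a^2/l^2 + e2/l^2)*x^2
      + (-2*M - e3/l^2)*x + (a^2 + e4/l^2) = 0).
  { intros x Hd Hq. rewrite <- Hcubic, Hd, Hq. unfold Rdiv. ring. }
  destruct (cubic_coefs_eq0 x1 x2 x3 x4 _ _ _ _ ltac:(lra) ltac:(lra) ltac:(lra)
              ltac:(lra) ltac:(lra) ltac:(lra)
              (Hroot x1 R1 ltac:(unfold quartic; ring)) (Hroot x2 R2 ltac:(unfold quartic; ring))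
              (Hroot x3 R3 ltac:(unfold quartic; ring)) (Hroot x4 R4 ltac:(unfold quartic; ring)))
    as (B3 & B2 & B1 & B0).
  split.
  - replace (x1 + x2 + x3 + x4) with (- (-(x1+x2+x3+x4)/l^2) * l^2) by (field; exact Hl).
    rewrite B3. ring.
  - apply functional_extensionality. intros x.
    specialize (Hcubic x). rewrite B3, B2, B1, B0 in Hcubic. lra.
Qed.

Definition well (w s : R) (D : R -> R) (x : R) : R := w * (x ^ 2 - s) ^ 2 / D x.

Definition well_deriv (w s : R) (D D' : R -> R) (x : R) : R :=
  w * (x ^ 2 - s) * (4 * x * D x - (x ^ 2 - s) * D' x) / D x ^ 2.

Lemma is_derive_well w s D D' x :
  is_derive D x (D' x) -> D x <> 0 -> is_derive (well w s D) x (well_deriv w s D D' x).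
Proof.
  intros HD Hx. unfold well, well_deriv. auto_derive.
  - split; [exists (D' x); exact HD | split; [exact Hx | exact I]].
  - replace (Derive (fun y => D y) x) with (D' x) by (symmetry; exact (is_derive_unique _ _ _ HD)).
    field. exact Hx.
Qed.

(* At a root q of x^2 - q^2 the factor multiplying x^2 - q^2 only contributes its value. *)
Lemma is_derive_well_deriv_root w q D D' :
  is_derive D q (D' q) -> ex_derive D' q -> D q <> 0 ->
  is_derive (well_deriv w (q ^ 2) D D') q (8 * w * q ^ 2 / D q).
Proof.
  intros HD HD' Hq. unfold well_deriv. auto_derive.
  - repeat split; auto; exists (D' q); exact HD.
  - replace (Derive (fun y => D y) q) with (D' q) by (symmetry; exact (is_derive_unique _ _ _ HD)).
    field. exact Hq.
Qed.

Lemma well_root_le w q D x : 0 <= w -> 0 < D x -> well w (q ^ 2) D q <= well w (q ^ 2) D x.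
Proof.
  intros Hw HD. unfold well.
  replace (w * (q ^ 2 - q ^ 2) ^ 2 / D q) with 0 by (unfold Rdiv; ring).
  apply Rdiv_le_0_compat; [apply Rmult_le_pos; [exact Hw | apply pow2_ge_0] | exact HD].
Qed.

Lemma ex_derive_n_on_well lo hi n w s D : ex_derive_n_on lo hi n D ->
  (forall x, lo < x < hi -> D x <> 0) -> ex_derive_n_on lo hi n (well w s D).
Proof.
  intros SD HD. unfold well, Rdiv.
  apply ex_derive_n_on_mult; [|apply ex_derive_n_on_inv; assumption].
  apply ex_derive_n_on_mult; [apply ex_derive_n_on_const|].
  apply ex_derive_n_on_pow, ex_derive_n_on_minus;
    [apply ex_derive_n_on_pow, ex_derive_n_on_id | apply ex_derive_n_on_const].
Qed.

Section Subextremal.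

Variables l a M rbm rm rp rbp : R.
Hypothesis Hl : 0 < l.
Hypothesis Hsub : subextremal l a M rbm rm rp rbp.

Lemma Delta_subextremal :
  rbm = - (rm + rp + rbp) /\ Delta l a M = fun r => - quartic rbm rm rp rbp r / l ^ 2.
Proof.
  destruct Hsub as (_ & Hbm & Hm & Hmp & Hpb & R1 & R2 & R3 & R4).
  destruct (Delta_quartic l a M rbm rm rp rbp) as [Hsum Hfac]; try assumption; try lra.
  split; [lra | exact Hfac].
Qed.

Lemma Delta'_subextremal r : Delta' l a M r = - quartic' rbm rm rp rbp r / l ^ 2.
Proof.
  assert (Hl0 : l <> 0) by lra.
  rewrite <- (is_derive_unique _ _ _ (is_derive_Delta l a M r Hl0)).
  destruct Delta_subextremal as [_ ->].
  apply is_derive_unique. unfold quartic, quartic'. auto_derive; [exact I | field; exact Hl0].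
Qed.

Lemma Delta_pos r : rp < r < rbp -> 0 < Delta l a M r.
Proof.
  intros Hr. destruct Delta_subextremal as [_ ->]. pose proof Hsub as (_ & Hbm & Hm & Hmp & _).
  unfold quartic.
  replace (- ((r - rbm) * (r - rm) * (r - rp) * (r - rbp)) / l ^ 2)
    with ((r - rbm) * (r - rm) * (r - rp) * (rbp - r) / l ^ 2) by (field; lra).
  apply Rdiv_lt_0_compat; [repeat apply Rmult_lt_0_compat; lra | apply pow_lt; exact Hl].
Qed.

Lemma Delta_radial_pos r s : rp < r < rbp -> rp ^ 2 <= s <= rbp ^ 2 ->
  0 < 4 * r * Delta l a M r - (r ^ 2 - s) * Delta' l a M r.
Proof.
  intros Hr Hs. rewrite Delta'_subextremal.
  destruct Delta_subextremal as [Hsum ->]. pose proof Hsub as (_ & _ & Hm & Hmp & _).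
  replace (4 * r * (- quartic rbm rm rp rbp r / l ^ 2)
           - (r ^ 2 - s) * (- quartic' rbm rm rp rbp r / l ^ 2))
    with (((r ^ 2 - s) * quartic' rbm rm rp rbp r - 4 * r * quartic rbm rm rp rbp r) / l ^ 2)
    by (field; lra).
  apply Rdiv_lt_0_compat; [|apply pow_lt; exact Hl].
  rewrite Hsum. apply quartic_radial_pos; auto.
Qed.

Lemma Derive_well_Delta w s r : rp < r < rbp ->
  Derive (well w s (Delta l a M)) r = well_deriv w s (Delta l a M) (Delta' l a M) r.
Proof.
  intros Hr. apply is_derive_unique, is_derive_well.
  - apply is_derive_Delta; lra.
  - apply Rgt_not_eq, Delta_pos, Hr.
Qed.

Lemma well_Delta_critical w q r : w <> 0 -> rp < q < rbp -> rp < r < rbp ->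
  Derive (well w (q ^ 2) (Delta l a M)) r = 0 -> r = q.
Proof.
  intros Hw Hq Hr Hcrit. rewrite Derive_well_Delta in Hcrit by exact Hr.
  pose proof (Delta_pos r Hr) as HD. pose proof Hsub as (_ & _ & Hm & Hmp & _).
  assert (Hrad : 0 < 4 * r * Delta l a M r - (r ^ 2 - q ^ 2) * Delta' l a M r).
  { apply Delta_radial_pos; [exact Hr | split; apply pow_incr; lra]. }
  unfold well_deriv, Rdiv in Hcrit.
  destruct (Rmult_integral _ _ Hcrit) as [H0 | H0];
    [| apply Rinv_neq_0_compat in H0; [contradiction | apply pow_nonzero; lra]].
  destruct (Rmult_integral _ _ H0) as [H1 | H1]; [| lra].
  destruct (Rmult_integral _ _ H1) as [H2 | H2]; [contradiction|].
  nra.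
Qed.

Lemma Derive_n_well_Delta_root w q : rp < q < rbp ->
  Derive_n (well w (q ^ 2) (Delta l a M)) 2 q = 8 * w * q ^ 2 / Delta l a M q.
Proof.
  intros Hq. simpl.
  rewrite (Derive_ext_loc _ (well_deriv w (q ^ 2) (Delta l a M) (Delta' l a M))).
  - apply is_derive_unique, is_derive_well_deriv_root.
    + apply is_derive_Delta; lra.
    + unfold Delta'. auto_derive. lra.
    + apply Rgt_not_eq, Delta_pos, Hq.
  - apply (locally_interval rp rbp); [exact Hq|]. exact (Derive_well_Delta w (q ^ 2)).
Qed.

End Subextremal.

Lemma superradiant_a_neq0 l a rp rbp omega m : superradiant l a rp rbp omega m -> a <> 0.
Proof.
  intros Hsr Ha. subst a. unfold superradiant, omega_plus, omegabar_plus in Hsr.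
  rewrite !Rmult_0_l, !Rdiv_0_l, !Rmult_0_r, !Rminus_0_r in Hsr. nra.
Qed.

(* Multiplying the superradiance condition by (r_+^2 + a^2)(bar r_+^2 + a^2) > 0 shows that
   omega (r^2 + a^2) - a m Xi changes sign between r_+ and bar r_+. *)
Lemma superradiant_radius l a rp rbp omega m : 0 <= rp < rbp ->
  superradiant l a rp rbp omega m ->
  a <> 0 /\ omega <> 0 /\
  exists rs, rp < rs < rbp /\ omega = a * IZR m * Xi l a / (rs ^ 2 + a ^ 2).
Proof.
  intros Hr Hsr. pose proof (superradiant_a_neq0 _ _ _ _ _ _ Hsr) as Ha.
  assert (Ha2 : 0 < a ^ 2) by (pose proof (pow2_ge_0 a); pose proof (pow_nonzero a 2 Ha); lra).
  remember (a * IZR m * Xi l a) as c eqn:Hcdef.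
  assert (Hchange : (omega * (rp ^ 2 + a ^ 2) - c) * (omega * (rbp ^ 2 + a ^ 2) - c) < 0).
  { unfold superradiant, omega_plus, omegabar_plus in Hsr.
    replace ((omega * (rp ^ 2 + a ^ 2) - c) * (omega * (rbp ^ 2 + a ^ 2) - c))
      with ((rp ^ 2 + a ^ 2) * (rbp ^ 2 + a ^ 2)
            * ((omega - IZR m * (a * Xi l a / (rp ^ 2 + a ^ 2)))
               * (omega - IZR m * (a * Xi l a / (rbp ^ 2 + a ^ 2)))))
      by (rewrite Hcdef; field; split; nra).
    assert (0 < (rp ^ 2 + a ^ 2) * (rbp ^ 2 + a ^ 2)) by (apply Rmult_lt_0_compat; nra).
    nra. }
  assert (Hw : omega <> 0) by (intros ->; nra).
  remember (c / omega - a ^ 2) as s eqn:Hsdef.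
  assert (Hs : (rp ^ 2 - s) * (rbp ^ 2 - s) < 0).
  { replace ((omega * (rp ^ 2 + a ^ 2) - c) * (omega * (rbp ^ 2 + a ^ 2) - c))
      with (omega ^ 2 * ((rp ^ 2 - s) * (rbp ^ 2 - s))) in Hchange by (rewrite Hsdef; field; exact Hw).
    pose proof (pow2_ge_0 omega). nra. }
  assert (Hsq : rp ^ 2 < rbp ^ 2) by nra.
  assert (Hrp2 : rp ^ 2 < s) by (destruct (Rlt_or_le (rp ^ 2) s); [assumption | nra]).
  assert (Hrbp2 : s < rbp ^ 2) by (destruct (Rlt_or_le s (rbp ^ 2)); [assumption | nra]).
  split; [exact Ha | split; [exact Hw | exists (sqrt s); split]].
  - rewrite <- (sqrt_pow2 rp), <- (sqrt_pow2 rbp) by lra.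
    split; apply sqrt_lt_1_alt; nra.
  - pose proof (pow2_ge_0 rp).
    assert (Hcw : 0 < c / omega) by lra.
    rewrite pow2_sqrt by lra. rewrite Hsdef. replace (c / omega - a ^ 2 + a ^ 2) with (c / omega) by ring.
    field. split; [exact Hw|]. intros Hc. rewrite Hc, Rdiv_0_l in Hcw. lra.
Qed.

Lemma radius_unique a c omega r1 r2 : a <> 0 -> omega <> 0 -> 0 <= r1 -> 0 <= r2 ->
  omega = c / (r1 ^ 2 + a ^ 2) -> omega = c / (r2 ^ 2 + a ^ 2) -> r1 = r2.
Proof.
  intros Ha Hw H1 H2 E1 E2.
  assert (Ha2 : 0 < a ^ 2) by (pose proof (pow2_ge_0 a); pose proof (pow_nonzero a 2 Ha); lra).
  assert (Hsq : omega * (r1 ^ 2 + a ^ 2) = omega * (r2 ^ 2 + a ^ 2)).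
  { transitivity c; [rewrite E1 | rewrite E2]; field; nra. }
  apply Rmult_eq_reg_l in Hsq; [|exact Hw].
  destruct (Rtotal_order r1 r2) as [Hlt | [Heq | Hgt]]; [nra | exact Heq | nra].
Qed.

Lemma TT_well l a M omega m rs : a <> 0 -> omega = a * IZR m * Xi l a / (rs ^ 2 + a ^ 2) ->
  TT l a M omega m = well (omega ^ 2) (rs ^ 2) (Delta l a M).
Proof.
  intros Ha Hw. apply functional_extensionality. intros r. unfold TT, well.
  assert (Ha2 : 0 < a ^ 2) by (pose proof (pow2_ge_0 a); pose proof (pow_nonzero a 2 Ha); lra).
  replace (a * IZR m * Xi l a) with (omega * (rs ^ 2 + a ^ 2)) by (rewrite Hw; field; nra).
  unfold Rdiv. set (iD := / Delta l a M r). field. nra.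
Qed.

Theorem mainTheorem1 (l a M rbm rm rp rbp omega : R) (m : Z) :
  0 < l ->
  subextremal l a M rbm rm rp rbp ->
  superradiant l a rp rbp omega m ->
  (forall (n : nat) (r : R), rp < r < rbp -> ex_derive_n (TT l a M omega m) n r) /\
  exists rcrit : R,
    rp < rcrit < rbp /\
    Derive (TT l a M omega m) rcrit = 0 /\
    (forall r : R, rp < r < rbp -> Derive (TT l a M omega m) r = 0 -> r = rcrit) /\
    (forall r : R, rp < r < rbp -> TT l a M omega m rcrit <= TT l a M omega m r) /\
    omega = a * IZR m * Xi l a / (rcrit ^ 2 + a ^ 2) /\
    (forall rs : R, rp < rs < rbp ->
        omega = a * IZR m * Xi l a / (rs ^ 2 + a ^ 2) -> rs = rcrit) /\
    Rabs (Derive_n (TT l a M omega m) 2 rcrit) > 0.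
Proof.
  intros Hl Hsub Hsr.
  pose proof Hsub as (_ & _ & Hm & Hmp & Hpb & _).
  destruct (superradiant_radius l a rp rbp omega m) as (Ha & Hw & rs & Hrs & Hws);
    [lra | exact Hsr |].
  pose proof (Delta_pos l a M rbm rm rp rbp Hl Hsub) as HD.
  rewrite (TT_well l a M omega m rs Ha Hws).
  split.
  { intros n r Hr. apply (ex_derive_n_on_ex_derive_n rp rbp); [|exact Hr].
    apply ex_derive_n_on_well; [apply ex_derive_n_on_Delta|].
    intros x Hx. apply Rgt_not_eq, HD, Hx. }
  exists rs. split; [exact Hrs|]. split.
  { rewrite (Derive_well_Delta l a M rbm rm rp rbp Hl Hsub) by exact Hrs.
    unfold well_deriv, Rdiv. ring. }
  assert (Hw2 : 0 < omega ^ 2) by (pose proof (pow2_ge_0 omega); pose proof (pow_nonzero omega 2 Hw); lra).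
  split; [intros r Hr; apply (well_Delta_critical l a M rbm rm rp rbp Hl Hsub); auto; lra|].
  split; [intros r Hr; apply well_root_le; [lra | apply HD, Hr]|].
  split; [exact Hws|].
  split; [intros r Hr Hwr; apply (radius_unique a (a * IZR m * Xi l a) omega); auto; lra|].
  rewrite (Derive_n_well_Delta_root l a M rbm rm rp rbp Hl Hsub) by exact Hrs.
  assert (H2 : 0 < 8 * omega ^ 2 * rs ^ 2 / Delta l a M rs).
  { apply Rdiv_lt_0_compat; [|exact (HD rs Hrs)].
    pose proof (pow_lt rs 2 ltac:(lra)). nra. }
  rewrite Rabs_pos_eq; lra.
Qed.
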